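(* Let $(\mathfrak g,[\cdot,\cdot],\alpha,\varepsilon)$ be a multiplicative color Hom-Lie algebra and let $\rho_1,\rho_2$ be representations of $\mathfrak g$ on $(M_1,\beta_1)$ and $(M_2,\beta_2)$ respectively. Define $\rho_1\otimes\rho_2:\mathfrak g\to\mathfrak{gl}(M_1\otimes M_2)$ by $(\rho_1\otimes\rho_2)(x)(m_1\otimes m_2)=\rho_1(x)(m_1)\otimes\beta_2(m_2)+\varepsilon(x,m_1)\,\beta_1(m_1)\otimes\rho_2(x)(m_2)$ for homogeneous $x,m_1,m_2$. Then $\rho_1\otimes\rho_2$ is a representation of $\mathfrak g$ on $(M_1\otimes M_2,\beta_1\otimes\beta_2)$.
   Context: $\mathbb K$ is a field of characteristic zero and $\Gamma$ an abelian group. A bicharacter is a map $\varepsilon:\Gamma\times\Gamma\to\mathbb K\setminus\{0\}$ with $\varepsilon(a,b)\varepsilon(b,a)=1$, $\varepsilon(a,b+c)=\varepsilon(a,b)\varepsilon(a,c)$, $\varepsilon(a+b,c)=\varepsilon(a,c)\varepsilon(b,c)$; for homogeneous elements $\varepsilon(x,y)=\varepsilon(\deg x,\deg y)$. A color Hom-Lie algebra $(\mathfrak g,[\cdot,\cdot],\alpha,\varepsilon)$: $\Gamma$-graded space, even bilinear bracket, even linear $\alpha$, with $[x,y]=-\varepsilon(x,y)[y,x]$ and $\varepsilon(z,x)[\alpha(x),[y,z]]+\varepsilon(x,y)[\alpha(y),[z,x]]+\varepsilon(y,z)[\alpha(z),[x,y]]=0$; multiplicative means $\alpha([x,y])=[\alpha(x),\alpha(y)]$.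 A representation of a multiplicative color Hom-Lie algebra $\mathfrak g$ on $(M,\beta)$ ($M$ $\Gamma$-graded, $\beta$ even linear) is an even linear $\rho:\mathfrak g\to\mathfrak{gl}(M)$ with $\rho([x,y])\circ\beta=\rho(\alpha(x))\circ\rho(y)-\varepsilon(x,y)\rho(\alpha(y))\circ\rho(x)$ and $\beta(\rho(x)(m))=\rho(\alpha(x))(\beta(m))$ for all $x\in\mathfrak g$, $m\in M$. $M_1\otimes M_2$ is graded by total degree. *)

From HB Require Import structures.
From mathcomp Require Import all_boot all_order all_algebra.
Set Implicit Arguments. Unset Strict Implicit. Unset Printing Implicit Defensive.
Import GRing.Theory.
Local Open Scope ring_scope.

Definition is_linear (K : fieldType) (U V : lmodType K) (f : U -> V) : Prop :=
  forall (c : K) (u v : U), f (c *: u + v) = c *: f u + f v.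

Definition is_bilinear (K : fieldType) (U V W : lmodType K) (f : U -> V -> W) : Prop :=
  (forall v, is_linear (fun u => f u v)) /\ (forall u, is_linear (f u)).

(* A Gamma-grading of V: H a v means "v is homogeneous of degree a"
   (v in V_a; 0 lies in every V_a).  The V_a are subspaces and V is
   their (internal) direct sum. *)
Definition is_graded (K : fieldType) (Gamma : zmodType) (V : lmodType K)
    (H : Gamma -> V -> Prop) : Prop :=
  (forall a, H a 0) /\
  (forall a (c : K) u v, H a u -> H a v -> H a (c *: u + v)) /\
  (forall v : V, exists s : seq (Gamma * V),
      uniq (map fst s) /\ (forall p, p \in s -> H p.1 p.2) /\
      v = \sum_(p <- s) p.2) /\
  (forall s : seq (Gamma * V),
      uniq (map fst s) -> (forall p, p \in s -> H p.1 p.2) ->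
      \sum_(p <- s) p.2 = 0 -> forall p, p \in s -> p.2 = 0).

Definition is_even (K : fieldType) (Gamma : zmodType) (U V : lmodType K)
    (HU : Gamma -> U -> Prop) (HV : Gamma -> V -> Prop) (f : U -> V) : Prop :=
  forall a u, HU a u -> HV a (f u).

Definition is_even2 (K : fieldType) (Gamma : zmodType) (U V W : lmodType K)
    (HU : Gamma -> U -> Prop) (HV : Gamma -> V -> Prop) (HW : Gamma -> W -> Prop)
    (f : U -> V -> W) : Prop :=
  forall a b u v, HU a u -> HV b v -> HW (a + b) (f u v).

Definition bicharacter (K : fieldType) (Gamma : zmodType) (eps : Gamma -> Gamma -> K) : Prop :=
  (forall a b, eps a b != 0) /\
  (forall a b, eps a b * eps b a = 1) /\
  (forall a b c, eps a (b + c) = eps a b * eps a c) /\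
  (forall a b c, eps (a + b) c = eps a c * eps b c).

Definition color_hom_lie (K : fieldType) (Gamma : zmodType) (eps : Gamma -> Gamma -> K)
    (g : lmodType K) (Hg : Gamma -> g -> Prop) (br : g -> g -> g) (alpha : g -> g) : Prop :=
  is_graded Hg /\ is_bilinear br /\ is_even2 Hg Hg Hg br /\
  is_linear alpha /\ is_even Hg Hg alpha /\
  (forall a b x y, Hg a x -> Hg b y -> br x y = - (eps a b *: br y x)) /\
  (forall a b c x y z, Hg a x -> Hg b y -> Hg c z ->
     eps c a *: br (alpha x) (br y z) + eps a b *: br (alpha y) (br z x)
     + eps b c *: br (alpha z) (br x y) = 0).

Definition hom_multiplicative (K : fieldType) (g : lmodType K) (br : g -> g -> g) (alpha : g -> g) : Prop :=
  forall x y, alpha (br x y) = br (alpha x) (alpha y).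

Definition is_rep (K : fieldType) (Gamma : zmodType) (eps : Gamma -> Gamma -> K)
    (g : lmodType K) (Hg : Gamma -> g -> Prop) (br : g -> g -> g) (alpha : g -> g)
    (M : lmodType K) (HM : Gamma -> M -> Prop) (beta : M -> M) (rho : g -> M -> M) : Prop :=
  is_graded HM /\ is_linear beta /\ is_even HM HM beta /\
  (forall x, is_linear (rho x)) /\
  (forall (c : K) x y m, rho (c *: x + y) m = c *: rho x m + rho y m) /\
  (forall a b x m, Hg a x -> HM b m -> HM (a + b) (rho x m)) /\
  (forall a b x y m, Hg a x -> Hg b y ->
     rho (br x y) (beta m) = rho (alpha x) (rho y m) - eps a b *: rho (alpha y) (rho x m)) /\
  (forall x m, beta (rho x m) = rho (alpha x) (beta m)).

(* (T, HT, tens) is the tensor product M1 (x) M2 of graded spaces, graded by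
   total degree: tens is the universal bilinear map, and tens(M1_a, M2_b)
   lies in T_(a+b). *)
Definition is_tensor_product (K : fieldType) (Gamma : zmodType)
    (M1 : lmodType K) (H1 : Gamma -> M1 -> Prop)
    (M2 : lmodType K) (H2 : Gamma -> M2 -> Prop)
    (T : lmodType K) (HT : Gamma -> T -> Prop) (tens : M1 -> M2 -> T) : Prop :=
  is_graded HT /\ is_bilinear tens /\ is_even2 H1 H2 HT tens /\
  (forall (W : lmodType K) (f : M1 -> M2 -> W), is_bilinear f ->
     exists h : T -> W, is_linear h /\ (forall m1 m2, h (tens m1 m2) = f m1 m2) /\
       (forall h' : T -> W, is_linear h' -> (forall m1 m2, h' (tens m1 m2) = f m1 m2) ->
          forall t, h' t = h t)).

Definition is_tensor_map (K : fieldType) (M1 M2 T : lmodType K) (tens : M1 -> M2 -> T)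
    (beta1 : M1 -> M1) (beta2 : M2 -> M2) (B : T -> T) : Prop :=
  is_linear B /\ forall m1 m2, B (tens m1 m2) = tens (beta1 m1) (beta2 m2).

Definition is_tensor_rep (K : fieldType) (Gamma : zmodType) (eps : Gamma -> Gamma -> K)
    (g : lmodType K) (Hg : Gamma -> g -> Prop)
    (M1 : lmodType K) (H1 : Gamma -> M1 -> Prop) (beta1 : M1 -> M1) (rho1 : g -> M1 -> M1)
    (M2 : lmodType K) (H2 : Gamma -> M2 -> Prop) (beta2 : M2 -> M2) (rho2 : g -> M2 -> M2)
    (T : lmodType K) (tens : M1 -> M2 -> T) (R : g -> T -> T) : Prop :=
  (forall x, is_linear (R x)) /\
  (forall (c : K) x y t, R (c *: x + y) t = c *: R x t + R y t) /\
  (forall a b d x m1 m2, Hg a x -> H1 b m1 -> H2 d m2 ->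
     R x (tens m1 m2) = tens (rho1 x m1) (beta2 m2) + eps a b *: tens (beta1 m1) (rho2 x m2)).

(** A linear identity between maps out of [M1 (x) M2] holds as soon as it holds
    on pure tensors [m1 (x) m2] of homogeneous vectors.  On such a tensor,
    expanding [R [x,y] (B t)] and [R (alpha x) (R y t) - eps(x,y) R (alpha y) (R x t)]
    with the representation identities of [rho1] and [rho2] leaves, besides the
    matching terms, two pairs of cross terms
    [rho1 (alpha _) (beta1 m1) (x) rho2 (alpha _) (beta2 m2)]; they cancel because
    [eps] is biadditive with [eps(a,b) eps(b,a) = 1].  Evenness of [B] and [R x]
    reduces to pure tensors in the same way, by showing that they commute with
    the projections of [M1 (x) M2] onto its homogeneous components. *)
From HB Require Import structures.
From mathcomp Require Import all_boot all_order all_algebra.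
From Stdlib Require Import ClassicalEpsilon.
Set Implicit Arguments. Unset Strict Implicit. Unset Printing Implicit Defensive.
Import GRing.Theory.
Local Open Scope ring_scope.

Section LinearMaps.
Variables (K : fieldType) (U V W : lmodType K).

Lemma is_linear0 (f : U -> V) : is_linear f -> f 0 = 0.
Proof. by move=> lf; have := lf (-1) 0 0; rewrite scaler0 addr0 scaleN1r addNr. Qed.

Lemma is_linearD (f : U -> V) : is_linear f -> forall u v, f (u + v) = f u + f v.
Proof. by move=> lf u v; have := lf 1 u v; rewrite !scale1r. Qed.

Lemma is_linearZ (f : U -> V) : is_linear f -> forall c u, f (c *: u) = c *: f u.
Proof. by move=> lf c u; have := lf c u 0; rewrite !addr0 (is_linear0 lf) addr0. Qed.

Lemma is_linearB (f : U -> V) : is_linear f -> forall u v, f (u - v) = f u - f v.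
Proof. by move=> lf u v; rewrite (is_linearD lf) -scaleN1r (is_linearZ lf) scaleN1r. Qed.

Lemma is_linear_sum (f : U -> V) : is_linear f ->
  forall (I : Type) (r : seq I) (P : pred I) (F : I -> U),
  f (\sum_(i <- r | P i) F i) = \sum_(i <- r | P i) f (F i).
Proof. by move=> lf I r P F; apply: big_morph; [apply: is_linearD | apply: is_linear0]. Qed.

Lemma is_linear_comp (f : U -> V) (h : V -> W) :
  is_linear f -> is_linear h -> is_linear (fun u => h (f u)).
Proof. by move=> lf lh c u v; rewrite lf lh. Qed.

Lemma is_linear_subZ (f h : U -> V) (e : K) :
  is_linear f -> is_linear h -> is_linear (fun u => f u - e *: h u).
Proof.
move=> lf lh c u v; rewrite lf lh scalerDr !scalerA mulrC -scalerA.
by rewrite opprD addrACA -scalerBr.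
Qed.

End LinearMaps.

Section GradedSpaces.
Variables (K : fieldType) (Gamma : zmodType).

Definition all_homog (V : lmodType K) (H : Gamma -> V -> Prop) (s : seq (Gamma * V)) :=
  forall p, p \in s -> H p.1 p.2.

Section OneSpace.
Variables (V : lmodType K) (H : Gamma -> V -> Prop).
Hypothesis V_graded : is_graded H.

Lemma graded_add b u v : H b u -> H b v -> H b (u + v).
Proof. by case: V_graded => _ [HL _] Hu Hv; rewrite -[u]scale1r; apply: HL. Qed.

Lemma graded_scale b c v : H b v -> H b (c *: v).
Proof. by case: V_graded => H0 [HL _] Hv; rewrite -[_ *: _]addr0; apply: HL. Qed.

Lemma graded_sum (s : seq (Gamma * V)) b :
  all_homog H s -> H b (\sum_(p <- s | p.1 == b) p.2).
Proof.
move=> Hs; rewrite big_seq_cond; apply: big_ind; first by case: V_graded.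
  exact: graded_add.
by move=> p /andP[ps /eqP <-]; apply: Hs.
Qed.

Lemma graded_ext (W : lmodType K) (f h : V -> W) :
  is_linear f -> is_linear h -> (forall a v, H a v -> f v = h v) -> f =1 h.
Proof.
case: V_graded => _ [_ [decomp _]] lf lh fh v; have [s [_ [Hs ->]]] := decomp v.
rewrite (is_linear_sum lf) (is_linear_sum lh); apply: eq_big_seq => p /Hs.
exact: fh.
Qed.

Lemma sum_by_degree (s : seq (Gamma * V)) (ks : seq Gamma) :
  uniq ks -> {subset map fst s <= ks} ->
  \sum_(k <- ks) \sum_(p <- s | p.1 == k) p.2 = \sum_(p <- s) p.2.
Proof.
move=> ks_uniq s_ks; under eq_bigr => k _ do rewrite big_mkcond.
rewrite exchange_big /=; apply: eq_big_seq => p ps.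
rewrite (bigD1_seq p.1) //= ?eqxx; last by apply: s_ks; apply: map_f.
by rewrite big1 ?addr0 // => k /negPf; rewrite eq_sym => ->.
Qed.

Lemma homog_parts_unique (s s' : seq (Gamma * V)) :
  all_homog H s -> all_homog H s' -> \sum_(p <- s) p.2 = \sum_(p <- s') p.2 ->
  forall b, \sum_(p <- s | p.1 == b) p.2 = \sum_(p <- s' | p.1 == b) p.2.
Proof.
move=> Hs Hs' eq_sum b.
set ks := undup (map fst s ++ map fst s').
pose D k := \sum_(p <- s | p.1 == k) p.2 - \sum_(p <- s' | p.1 == k) p.2.
pose l := map (fun k => (k, D k)) ks.
have l_uniq : uniq (map fst l) by rewrite /l -map_comp map_id undup_uniq.
have l_homog : all_homog H l.
  move=> p /mapP[k _ ->] /=; apply: graded_add; first exact: graded_sum.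
  by rewrite -scaleN1r; apply/graded_scale/graded_sum.
have l_sum0 : \sum_(p <- l) p.2 = 0.
  rewrite big_map /D sumrB !sum_by_degree ?eq_sum ?subrr ?undup_uniq // => k kin;
    by rewrite mem_undup mem_cat kin ?orbT.
have [bin | bnin] := boolP (b \in ks).
  case: V_graded => _ [_ [_ direct]].
  have /eqP := direct l l_uniq l_homog l_sum0 (b, D b) (map_f _ bin).
  by rewrite /D subr_eq0 => /eqP.
rewrite !big1_seq // => p /andP[/eqP pb ps]; case/negP: bnin;
  by rewrite mem_undup mem_cat -pb (map_f fst ps) ?orbT.
Qed.

Definition homog_decomp (v : V) : seq (Gamma * V) :=
  proj1_sig (constructive_indefinite_description _ (proj1 (proj2 (proj2 V_graded)) v)).

Lemma homog_decompP v :
  all_homog H (homog_decomp v) /\ v = \sum_(p <- homog_decomp v) p.2.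
Proof. by rewrite /homog_decomp; case: constructive_indefinite_description => s [_ [Hs E]] /=. Qed.

Definition homog_comp (b : Gamma) (v : V) : V :=
  \sum_(p <- homog_decomp v | p.1 == b) p.2.

Lemma homog_comp_sum (s : seq (Gamma * V)) b :
  all_homog H s -> homog_comp b (\sum_(p <- s) p.2) = \sum_(p <- s | p.1 == b) p.2.
Proof.
move=> Hs; have [Hd Ed] := homog_decompP (\sum_(p <- s) p.2).
exact: homog_parts_unique Hd Hs (esym Ed) b.
Qed.

Lemma homog_comp_linear b : is_linear (homog_comp b).
Proof.
move=> c u v; have [Hu Eu] := homog_decompP u; have [Hv Ev] := homog_decompP v.
pose s := map (fun p => (p.1, c *: p.2)) (homog_decomp u) ++ homog_decomp v.
have Hs : all_homog H s.
  move=> p; rewrite mem_cat => /orP[/mapP[q qin ->] | pin] /=; last exact: Hv.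
  exact/graded_scale/Hu.
have -> : c *: u + v = \sum_(p <- s) p.2.
  by rewrite big_cat big_map /= -scaler_sumr -Eu -Ev.
by rewrite homog_comp_sum // big_cat big_map /= -scaler_sumr.
Qed.

Lemma homog_compE a b v : H a v -> homog_comp b v = if a == b then v else 0.
Proof.
move=> Hv; have := @homog_comp_sum [:: (a, v)] b.
rewrite !big_cons !big_nil /= addr0 => ->; first by case: (a == b); rewrite ?addr0.
by move=> p; rewrite inE => /eqP ->.
Qed.

Lemma homog_comp_homog b v : H b (homog_comp b v).
Proof. exact/graded_sum/(proj1 (homog_decompP v)). Qed.

End OneSpace.

Lemma degree_shift_of_comp (V W : lmodType K) (HV : Gamma -> V -> Prop)
    (HW : Gamma -> W -> Prop) (GV : is_graded HV) (GW : is_graded HW) (L : V -> W) a :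
  (forall b v, homog_comp GW (a + b) (L v) = L (homog_comp GV b v)) ->
  forall b v, HV b v -> HW (a + b) (L v).
Proof.
move=> L_comp b v Hv; have := homog_compE GV b Hv; rewrite eqxx => <-.
by rewrite -L_comp; apply: homog_comp_homog.
Qed.

End GradedSpaces.

Section TensorProducts.
Variables (K : fieldType) (Gamma : zmodType).
Variables (M1 : lmodType K) (H1 : Gamma -> M1 -> Prop).
Variables (M2 : lmodType K) (H2 : Gamma -> M2 -> Prop).
Variables (T : lmodType K) (HT : Gamma -> T -> Prop) (tens : M1 -> M2 -> T).
Hypotheses (M1_graded : is_graded H1) (M2_graded : is_graded H2).
Hypothesis tensor : is_tensor_product H1 H2 HT tens.

Lemma tensor_ext (W : lmodType K) (L1 L2 : T -> W) :
  is_linear L1 -> is_linear L2 ->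
  (forall a b u v, H1 a u -> H2 b v -> L1 (tens u v) = L2 (tens u v)) -> L1 =1 L2.
Proof.
case: tensor => _ [[tens_l tens_r] [_ univ]] lL1 lL2 L12.
have L12_tens u v : L1 (tens u v) = L2 (tens u v).
  apply: (graded_ext M1_graded (f := fun u => L1 (tens u v))
                               (h := fun u => L2 (tens u v))) => [||a u' Hu'].
  - exact: is_linear_comp.
  - exact: is_linear_comp.
  apply: (graded_ext M2_graded (f := L1 \o tens u') (h := L2 \o tens u')) => [||b v' Hv'].
  - exact: is_linear_comp.
  - exact: is_linear_comp.
  exact: L12 Hu' Hv'.
have [|h [_ [_ h_uniq]]] := univ W (fun u v => L1 (tens u v)).
  by split=> [v | u]; apply: is_linear_comp.
by move=> t; rewrite (h_uniq L1) // (h_uniq L2).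
Qed.

Lemma tensor_degree_shift (L : T -> T) a : is_linear L ->
  (forall c d u v, H1 c u -> H2 d v -> HT (a + (c + d)) (L (tens u v))) ->
  forall b t, HT b t -> HT (a + b) (L t).
Proof.
case: tensor => T_graded [_ [tens_even _]] lL L_tens.
apply: (degree_shift_of_comp (GV := T_graded) (GW := T_graded)) => b.
apply: tensor_ext => [||c d u v Hu Hv].
- exact/is_linear_comp/homog_comp_linear.
- exact/(is_linear_comp (homog_comp_linear _ _))/lL.
rewrite (homog_compE _ _ (L_tens _ _ _ _ Hu Hv)).
rewrite (homog_compE _ _ (tens_even _ _ _ _ Hu Hv)) (inj_eq (addrI a)).
by case: eqP => // _; rewrite (is_linear0 lL).
Qed.

End TensorProducts.

Lemma color_cross_terms_cancel (S : comPzRingType) (V : lmodType S)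
    (eab eba eac ebc : S) (P1 P2 Q1 Q2 X1 X2 : V) :
  eab * eba = 1 ->
  P1 - eab *: P2 + (eac * ebc) *: (Q1 - eab *: Q2)
  = P1 + (eab * eac) *: X1 + ebc *: (X2 + eac *: Q1)
    - eab *: (P2 + (eba * ebc) *: X2 + eac *: (X1 + ebc *: Q2)).
Proof.
move=> eabK; rewrite !scalerDr !scalerN !scalerA mulrA eabK mul1r (mulrC ebc).
rewrite (mulrC _ eab) mulrA !opprD !addrA; congr (_ - _).
set x1 := _ *: X1; set x2 := _ *: X2; set q1 := _ *: Q1; set p2 := _ *: P2.
rewrite (addrAC _ (- p2) (- x2)) (addrAC _ q1 (- x2)) addrK.
by rewrite (addrAC _ (- p2) (- x1)) (addrAC _ q1 (- x1)) addrK addrAC.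
Qed.

Section TensorRepresentation.
Variables (K : fieldType) (Gamma : zmodType) (eps : Gamma -> Gamma -> K).
Variables (g : lmodType K) (Hg : Gamma -> g -> Prop) (br : g -> g -> g) (alpha : g -> g).
Variables (M1 : lmodType K) (H1 : Gamma -> M1 -> Prop).
Variables (beta1 : M1 -> M1) (rho1 : g -> M1 -> M1).
Variables (M2 : lmodType K) (H2 : Gamma -> M2 -> Prop).
Variables (beta2 : M2 -> M2) (rho2 : g -> M2 -> M2).
Variables (T : lmodType K) (HT : Gamma -> T -> Prop) (tens : M1 -> M2 -> T).
Variables (B : T -> T) (R : g -> T -> T).

(* Declared first, so that [tensor_rep_is_rep R_tens] fixes every parameter. *)
Hypothesis R_tens : forall a b d x m1 m2, Hg a x -> H1 b m1 -> H2 d m2 ->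
  R x (tens m1 m2) = tens (rho1 x m1) (beta2 m2) + eps a b *: tens (beta1 m1) (rho2 x m2).

Hypothesis epsK : forall a b, eps a b * eps b a = 1.
Hypothesis eps_addr : forall a b c, eps a (b + c) = eps a b * eps a c.
Hypothesis eps_addl : forall a b c, eps (a + b) c = eps a c * eps b c.

Hypothesis g_graded : is_graded Hg.
Hypothesis br_even : forall a b x y, Hg a x -> Hg b y -> Hg (a + b) (br x y).
Hypothesis alpha_linear : is_linear alpha.
Hypothesis alpha_even : forall a x, Hg a x -> Hg a (alpha x).

Hypothesis M1_graded : is_graded H1.
Hypothesis beta1_even : forall a m, H1 a m -> H1 a (beta1 m).
Hypothesis rho1_even : forall a b x m, Hg a x -> H1 b m -> H1 (a + b) (rho1 x m).
Hypothesis rho1_bracket : forall a b x y m, Hg a x -> Hg b y ->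
  rho1 (br x y) (beta1 m) = rho1 (alpha x) (rho1 y m) - eps a b *: rho1 (alpha y) (rho1 x m).
Hypothesis beta1_rho1 : forall x m, beta1 (rho1 x m) = rho1 (alpha x) (beta1 m).

Hypothesis M2_graded : is_graded H2.
Hypothesis beta2_even : forall a m, H2 a m -> H2 a (beta2 m).
Hypothesis rho2_even : forall a b x m, Hg a x -> H2 b m -> H2 (a + b) (rho2 x m).
Hypothesis rho2_bracket : forall a b x y m, Hg a x -> Hg b y ->
  rho2 (br x y) (beta2 m) = rho2 (alpha x) (rho2 y m) - eps a b *: rho2 (alpha y) (rho2 x m).
Hypothesis beta2_rho2 : forall x m, beta2 (rho2 x m) = rho2 (alpha x) (beta2 m).

Hypothesis tensor : is_tensor_product H1 H2 HT tens.
Hypothesis B_linear : is_linear B.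
Hypothesis B_tens : forall m1 m2, B (tens m1 m2) = tens (beta1 m1) (beta2 m2).
Hypothesis R_linear : forall x, is_linear (R x).
Hypothesis R_linear_left : forall (c : K) x y t, R (c *: x + y) t = c *: R x t + R y t.

Let T_graded : is_graded HT := proj1 tensor.
Let tens_linear_l : forall v, is_linear (fun u => tens u v) := proj1 (proj1 (proj2 tensor)).
Let tens_linear_r : forall u, is_linear (tens u) := proj2 (proj1 (proj2 tensor)).
Let tens_even : forall a b u v, H1 a u -> H2 b v -> HT (a + b) (tens u v) :=
  proj1 (proj2 (proj2 tensor)).

Arguments br_even {a b x y}. Arguments alpha_even {a x}.
Arguments beta1_even {a m}. Arguments rho1_even {a b x m}. Arguments rho1_bracket {a b x y} m.
Arguments beta2_even {a m}. Arguments rho2_even {a b x m}. Arguments rho2_bracket {a b x y} m.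
Arguments R_tens {a b d x m1 m2}. Arguments tens_even {a b u v}.

Lemma tensor_map_even : is_even HT HT B.
Proof.
move=> b t Ht; rewrite -[b]add0r; apply: (tensor_degree_shift M1_graded M2_graded tensor) => //.
by move=> c d u v Hu Hv; rewrite B_tens add0r; apply: tens_even (beta1_even Hu) (beta2_even Hv).
Qed.

Lemma tensor_rep_even a b x t : Hg a x -> HT b t -> HT (a + b) (R x t).
Proof.
move=> Hx; apply: (tensor_degree_shift M1_graded M2_graded tensor) => // c d u v Hu Hv.
rewrite (R_tens Hx Hu Hv); apply: (graded_add T_graded).
  by rewrite addrA; apply: tens_even (rho1_even Hx Hu) (beta2_even Hv).
apply: (graded_scale T_graded); rewrite addrCA.
exact: tens_even (beta1_even Hu) (rho2_even Hx Hv).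
Qed.

Lemma tensor_rep_bracket_tens a b c d x y u v :
  Hg a x -> Hg b y -> H1 c u -> H2 d v ->
  R (br x y) (B (tens u v))
  = R (alpha x) (R y (tens u v)) - eps a b *: R (alpha y) (R x (tens u v)).
Proof.
move=> Hx Hy Hu Hv; have Hax := alpha_even Hx; have Hay := alpha_even Hy.
rewrite B_tens (R_tens (br_even Hx Hy) (beta1_even Hu) (beta2_even Hv)).
rewrite (rho1_bracket _ Hx Hy) (rho2_bracket _ Hx Hy) (R_tens Hy Hu Hv) (R_tens Hx Hu Hv).
rewrite !(is_linearD (R_linear _)) !(is_linearZ (R_linear _)).
rewrite (R_tens Hax (rho1_even Hy Hu) (beta2_even Hv)).
rewrite (R_tens Hax (beta1_even Hu) (rho2_even Hy Hv)).
rewrite (R_tens Hay (rho1_even Hx Hu) (beta2_even Hv)).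
rewrite (R_tens Hay (beta1_even Hu) (rho2_even Hx Hv)) !beta1_rho1 !beta2_rho2.
rewrite (is_linearB (tens_linear_l _)) (is_linearZ (tens_linear_l _)).
rewrite (is_linearB (tens_linear_r _)) (is_linearZ (tens_linear_r _)).
by rewrite eps_addl !eps_addr; apply: color_cross_terms_cancel.
Qed.

Lemma tensor_rep_bracket a b x y t : Hg a x -> Hg b y ->
  R (br x y) (B t) = R (alpha x) (R y t) - eps a b *: R (alpha y) (R x t).
Proof.
move=> Hx Hy; move: t; apply: (tensor_ext M1_graded M2_graded tensor).
- exact: is_linear_comp.
- by apply: is_linear_subZ; apply: is_linear_comp.
by move=> c d u v Hu Hv; apply: tensor_rep_bracket_tens Hx Hy Hu Hv.
Qed.

Lemma tensor_map_rep x t : B (R x t) = R (alpha x) (B t).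
Proof.
move: x; apply: (graded_ext g_graded) => [c x y | c x y | a x Hx].
- by rewrite R_linear_left (is_linearD B_linear) (is_linearZ B_linear).
- by rewrite alpha_linear R_linear_left.
move: t; apply: (tensor_ext M1_graded M2_graded tensor) => [||c d u v Hu Hv].
- exact: is_linear_comp.
- exact: is_linear_comp.
rewrite (R_tens Hx Hu Hv) (is_linearD B_linear) (is_linearZ B_linear) !B_tens.
by rewrite beta1_rho1 beta2_rho2 (R_tens (alpha_even Hx) (beta1_even Hu) (beta2_even Hv)).
Qed.

Lemma tensor_rep_is_rep : is_rep eps Hg br alpha HT B R.
Proof.
split; first exact: T_graded.
split; first exact: B_linear.
split; first exact: tensor_map_even.
split; first exact: R_linear.
split; first exact: R_linear_left.
split; first exact: tensor_rep_even.
split; first exact: tensor_rep_bracket.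
exact: tensor_map_rep.
Qed.

End TensorRepresentation.

Theorem mainTheorem12 (K : fieldType) (Gamma : zmodType) (eps : Gamma -> Gamma -> K)
    (g : lmodType K) (Hg : Gamma -> g -> Prop) (br : g -> g -> g) (alpha : g -> g)
    (M1 : lmodType K) (H1 : Gamma -> M1 -> Prop) (beta1 : M1 -> M1) (rho1 : g -> M1 -> M1)
    (M2 : lmodType K) (H2 : Gamma -> M2 -> Prop) (beta2 : M2 -> M2) (rho2 : g -> M2 -> M2)
    (T : lmodType K) (HT : Gamma -> T -> Prop) (tens : M1 -> M2 -> T)
    (B : T -> T) (R : g -> T -> T) :
  [pchar K] =i pred0 ->
  bicharacter eps ->
  color_hom_lie eps Hg br alpha ->
  hom_multiplicative br alpha ->
  is_rep eps Hg br alpha H1 beta1 rho1 ->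
  is_rep eps Hg br alpha H2 beta2 rho2 ->
  is_tensor_product H1 H2 HT tens ->
  is_tensor_map tens beta1 beta2 B ->
  is_tensor_rep eps Hg H1 beta1 rho1 H2 beta2 rho2 tens R ->
  is_rep eps Hg br alpha HT B R.
Proof.
move=> _ [_ [epsK [eps_addr eps_addl]]] [g_graded [_ [br_even [alpha_linear [alpha_even _]]]]] _
  [M1_graded [_ [beta1_even [_ [_ [rho1_even [rho1_bracket beta1_rho1]]]]]]]
  [M2_graded [_ [beta2_even [_ [_ [rho2_even [rho2_bracket beta2_rho2]]]]]]]
  tensor [B_linear B_tens] [R_linear [R_linear_left R_tens]].
exact: (tensor_rep_is_rep R_tens).
Qed.
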